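(* Let $G$ be a finite graph and $a\in V(G)$. Suppose $G=H_1\cup\dots\cup H_m$ ($m\ge1$), where each $H_j$ is a connected subgraph of $G$ containing $a$ such that $H_j-a$ is nonempty and connected, $V(H_j)\cap V(H_l)=\{a\}$ for $j\ne l$, and every edge of $G$ lies in exactly one $H_j$. Call $H_j$ and $H_l$ equivalent if there is a graph isomorphism $H_j\to H_l$ mapping $a$ to $a$, and suppose there are $g$ equivalence classes, the $i$-th consisting of $m_i$ graphs each isomorphic (with $a\mapsto a$) to a graph $G_i$. Then for every positive integer $k$, $$D(G,k;a)=k\prod_{i=1}^g\binom{D(G_i,k;a)/k}{m_i}.$$
   Context: A $k$-labeling of a graph $X$ is a map $\phi:V(X)\to\{1,\dots,k\}$; an automorphism $\pi$ preserves $\phi$ if $\phi(\pi(v))=\phi(v)$ for all $v$. For a subgroup $\Gamma\le\mathrm{Aut}(X)$, $\phi$ is $\Gamma$-distinguishing if the only element of $\Gamma$ preserving $\phi$ is the identity; $\phi,\phi'$ are equivalent with respect to $\Gamma$ if some $\pi\in\Gamma$ satisfies $\phi'(\pi(v))=\phi(v)$ for all $v$; $D(X,k;\Gamma)$ is the number of $\Gamma$-equivalence classes of $\Gamma$-distinguishing $k$-labelings. For a vertex $a$, $\mathrm{Aut}(X;a)$ is the group of automorphisms of $X$ fixing $a$, and $D(X,k;a):=D(X,k;\mathrm{Aut}(X;a))$ (which is divisible by $k$). *)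

From mathcomp Require Import all_boot all_fingroup.
Set Implicit Arguments. Unset Strict Implicit. Unset Printing Implicit Defensive.

(* A (simple) graph on a finite vertex type T is a relation e : rel T,
   assumed symmetric and irreflexive where needed. *)

Section Labelings.
Variables (T : finType) (e : rel T) (a : T) (k : nat).

Definition aut_fix (p : {perm T}) : bool :=
  [forall x, forall y, e (p x) (p y) == e x y] && (p a == a).

(* k-labelings: maps V -> {1..k}, here encoded by 'I_k *)
Definition labeling := {ffun T -> 'I_k}.

Definition preserves (p : {perm T}) (phi : labeling) : bool :=
  [forall v, phi (p v) == phi v].

Definition distinguishing (phi : labeling) : bool :=
  [forall p : {perm T}, (aut_fix p && preserves p phi) ==> (p == 1%g)].

Definition lab_equiv (phi phi' : labeling) : bool :=
  [exists p : {perm T}, aut_fix p && [forall v, phi' (p v) == phi v]].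

Definition Dnum : nat :=
  #|[set [set phi' : labeling | distinguishing phi' && lab_equiv phi phi']
     | phi in [set phi : labeling | distinguishing phi]]|.

End Labelings.

Definition connected_on (T : finType) (V : {set T}) (r : rel T) : Prop :=
  forall x y, x \in V -> y \in V ->
    connect [rel u v | [&& r u v, u \in V & v \in V]] x y.

Definition rooted_iso (T U : finType) (VT : {set T}) (eT : rel T) (a : T)
    (VU : {set U}) (eU : rel U) (b : U) : Prop :=
  exists f : T -> U,
    [/\ {in VT &, injective f}, f @: VT = VU,
        {in VT &, forall x y, eU (f x) (f y) = eT x y} & f a = b].

From mathcomp Require Import all_boot all_fingroup.
Set Implicit Arguments. Unset Strict Implicit. Unset Printing Implicit Defensive.

(* An automorphism of G fixing a permutes the blocks H_j - a (they are connected, and only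
   meet at a), sending each block onto a rooted-isomorphic one; conversely any class-preserving
   permutation of the blocks together with rooted automorphisms of the G_i glues to such an
   automorphism. Hence a labeling phi of G is distinguishing iff its restriction to every block
   is distinguishing and restrictions to distinct blocks of the same class are inequivalent,
   and the class of phi is determined by phi(a) and, for each i, the set of m_i classes of its
   restrictions to the blocks of class i. These sets range over all m_i-subsets of the
   D(G_i,k;a)/k classes with root colour phi(a), the factor k coming from permuting colours. *)

Lemma card_imset_kernel (A B C : finType) (X : {set A}) (F : A -> B) (G : A -> C) :
  {in X &, forall x y, (F x == F y) = (G x == G y)} -> #|F @: X| = #|G @: X|.
Proof.
move=> FG; have [-> | [x0 Xx0]] := set_0Vmem X; first by rewrite !imset0 !cards0.
pose H b := G (odflt x0 [pick x in X | F x == b]).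
have HF x : x \in X -> H (F x) = G x.
  move=> Xx; rewrite /H; case: pickP => [y /andP [Xy /eqP Fyx] | /(_ x)] /=.
    by apply/eqP; rewrite -FG // Fyx.
  by rewrite Xx eqxx.
have -> : G @: X = H @: (F @: X).
  by rewrite -imset_comp; apply: eq_in_imset => x Xx /=; rewrite HF.
rewrite [RHS]card_in_imset // => _ _ /imsetP [x1 Xx1 ->] /imsetP [x2 Xx2 ->].
by rewrite !HF // => /eqP; rewrite -FG // => /eqP.
Qed.

Lemma card_by_fst (A B : finType) (Z : {set A * B}) :
  #|Z| = \sum_(c : A) #|[set b | (c, b) \in Z]|.
Proof.
have -> : \sum_(c : A) #|[set b | (c, b) \in Z]| = \sum_(c : A) \sum_(b : B) ((c, b) \in Z : nat).
  apply: eq_bigr => c _; rewrite -sum1_card big_mkcond.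
  by apply: eq_bigr => b _; rewrite inE.
by rewrite pair_big /= -sum1_card big_mkcond; apply: eq_bigr => -[c b] _.
Qed.

Section RootedLabelings.
Variables (T : finType) (e : rel T) (a : T) (k : nat).

Lemma aut_fixP (p : {perm T}) :
  reflect ((forall x y, e (p x) (p y) = e x y) /\ p a = a) (aut_fix e a p).
Proof.
apply: (iffP andP) => [[/forallP pe /eqP pa]|[pe pa]]; split=> //.
- by move=> x y; apply/eqP; move/forallP: (pe x).
- by apply/forallP => x; apply/forallP => y; rewrite pe.
- exact/eqP.
Qed.

Lemma aut_fix1 : aut_fix e a 1.
Proof. by apply/aut_fixP; split=> [x y|]; rewrite !perm1. Qed.

Lemma aut_fixV p : aut_fix e a p -> aut_fix e a p^-1.
Proof.
case/aut_fixP => pe pa; apply/aut_fixP; split=> [x y|].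
  by rewrite -pe !permKV.
by rewrite -{1}pa permK.
Qed.

Lemma aut_fixM p q : aut_fix e a p -> aut_fix e a q -> aut_fix e a (p * q).
Proof.
case/aut_fixP => pe pa /aut_fixP [qe qa]; apply/aut_fixP.
by split=> [x y|]; rewrite !permM ?qe ?pe // pa qa.
Qed.

Lemma preserves1 (phi : labeling T k) : preserves 1 phi.
Proof. by apply/forallP => v; rewrite perm1. Qed.

Lemma distinguishing_perm1 (phi : labeling T k) p :
  distinguishing e a phi -> aut_fix e a p -> preserves p phi -> p = 1%g.
Proof. by move=> /forallP /(_ p) /implyP dphi Ap pphi; apply/eqP/dphi/andP. Qed.

Lemma lab_equiv_refl (phi : labeling T k) : lab_equiv e a phi phi.
Proof. by apply/existsP; exists 1%g; rewrite aut_fix1; apply/forallP => v; rewrite perm1. Qed.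

Lemma lab_equiv_sym (phi phi' : labeling T k) :
  lab_equiv e a phi phi' -> lab_equiv e a phi' phi.
Proof.
case/existsP => p /andP [Ap /forallP phi'p]; apply/existsP; exists p^-1%g.
rewrite aut_fixV //; apply/forallP => v.
by move/eqP: (phi'p (p^-1%g v)); rewrite permKV => ->.
Qed.

Lemma lab_equiv_trans (phi phi' phi'' : labeling T k) :
  lab_equiv e a phi phi' -> lab_equiv e a phi' phi'' -> lab_equiv e a phi phi''.
Proof.
case/existsP => p /andP [Ap /forallP phi'p]; case/existsP => q /andP [Aq /forallP phi''q].
apply/existsP; exists (p * q)%g; rewrite aut_fixM //; apply/forallP => v.
by rewrite permM (eqP (phi''q _)) (eqP (phi'p _)).
Qed.

Lemma lab_equiv_root (phi phi' : labeling T k) :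
  lab_equiv e a phi phi' -> phi' a = phi a.
Proof.
by case/existsP => p /andP [/aut_fixP [_ pa] /forallP /(_ a)]; rewrite pa => /eqP.
Qed.

Definition lab_class (phi : labeling T k) :=
  [set phi' : labeling T k | distinguishing e a phi' && lab_equiv e a phi phi'].

Lemma eq_lab_class (phi phi' : labeling T k) :
  distinguishing e a phi -> distinguishing e a phi' ->
  (lab_class phi == lab_class phi') = lab_equiv e a phi phi'.
Proof.
move=> dphi dphi'; apply/eqP/idP => [E | phi_phi'].
  have : phi' \in lab_class phi' by rewrite inE dphi' lab_equiv_refl.
  by rewrite -E inE => /andP [].
apply/setP => psi; rewrite !inE; case: (distinguishing e a psi) => //=.
apply/idP/idP; last exact: lab_equiv_trans.
by apply: lab_equiv_trans; apply: lab_equiv_sym.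
Qed.

Lemma DnumE : Dnum e a k = #|lab_class @: [set phi | distinguishing e a phi]|.
Proof. by []. Qed.

End RootedLabelings.
Arguments lab_class {T} e a {k} phi.

Section RootColour.
Variables (T : finType) (e : rel T) (a : T) (k : nat).

Definition recolour (t : {perm 'I_k}) (phi : labeling T k) : labeling T k :=
  [ffun v => t (phi v)].

Lemma distinguishing_recolour t phi :
  distinguishing e a (recolour t phi) = distinguishing e a phi.
Proof.
apply: eq_forallb => p; congr (_ ==> _); congr (_ && _).
by apply: eq_forallb => v; rewrite !ffunE (inj_eq perm_inj).
Qed.

Lemma lab_equiv_recolour t phi phi' :
  lab_equiv e a (recolour t phi) (recolour t phi') = lab_equiv e a phi phi'.
Proof.
apply: eq_existsb => p; congr (_ && _); apply: eq_forallb => v.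
by rewrite !ffunE (inj_eq perm_inj).
Qed.

Definition dist_root (c : 'I_k) :=
  [set phi : labeling T k | distinguishing e a phi && (phi a == c)].

Lemma card_lab_class_root c c' :
  #|lab_class e a @: dist_root c| = #|lab_class e a @: dist_root c'|.
Proof.
pose t := tperm c c'.
have recolour_root : recolour t @: dist_root c = dist_root c'.
  apply/setP => phi; apply/imsetP/idP => [[psi] | ].
    move=> + ->; rewrite !inE distinguishing_recolour ffunE => /andP [-> /eqP ->].
    by rewrite /t tpermL eqxx.
  rewrite inE => /andP [dphi /eqP phia]; exists (recolour t^-1 phi).
    by rewrite inE distinguishing_recolour dphi ffunE phia /t tpermV tpermR eqxx.
  by apply/ffunP => v; rewrite !ffunE permKV.
rewrite (@card_imset_kernel _ _ _ _ _ (lab_class e a \o recolour t)); last first.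
  move=> phi psi; rewrite !inE /= => /andP [dphi _] /andP [dpsi _].
  by rewrite !eq_lab_class ?distinguishing_recolour ?lab_equiv_recolour.
by rewrite imset_comp recolour_root.
Qed.

Lemma Dnum_root (c : 'I_k) : Dnum e a k = k * #|lab_class e a @: dist_root c|.
Proof.
pose root_class (phi : labeling T k) := (phi a, lab_class e a phi).
rewrite DnumE (@card_imset_kernel _ _ _ _ _ root_class).
  rewrite card_by_fst -[k in k * _]card_ord -sum_nat_const.
  apply: eq_bigr => c' _; rewrite (card_lab_class_root c c').
  apply: eq_card => C; rewrite inE; apply/imsetP/imsetP => [[phi] | [phi]].
    by rewrite inE => dphi [-> ->]; exists phi; rewrite ?inE ?dphi ?eqxx.
  by rewrite inE => /andP [dphi /eqP <-] ->; exists phi; rewrite ?inE.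
move=> phi psi; rewrite !inE => dphi dpsi; rewrite xpair_eqE.
have [E | _] := boolP (lab_class e a phi == lab_class e a psi); last by rewrite andbF.
by move: (E); rewrite andbT eq_lab_class // => /lab_equiv_root ->; rewrite eqxx.
Qed.

End RootColour.

Section BlockDecomposition.
Local Unset Implicit Arguments.
Variables (T : finType) (e : rel T) (a : T) (m : nat) (Vs : 'I_m -> {set T})
  (eH : 'I_m -> rel T) (g : nat) (VG : 'I_g -> finType) (EG : forall i, rel (VG i))
  (aG : forall i, VG i) (cls : 'I_m -> 'I_g).
Local Set Implicit Arguments.
Hypotheses (e_sym : symmetric e) (e_irr : irreflexive e) (m_gt0 : 0 < m)
  (a_in_Vs : forall j, a \in Vs j)
  (eH_sub : forall j x y, eH j x y -> [&& e x y, x \in Vs j & y \in Vs j])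
  (Vs_a_neq0 : forall j, Vs j :\ a != set0)
  (Vs_a_connected : forall j, connected_on (Vs j :\ a) (eH j))
  (Vs_meet : forall j l, j != l -> Vs j :&: Vs l = [set a])
  (Vs_cover : forall x, exists j, x \in Vs j)
  (edge_uniq : forall x y, e x y -> exists! j, eH j x y)
  (iso_G : forall j,
     rooted_iso (Vs j) (eH j) a [set: VG (cls j)] (EG (cls j)) (aG (cls j)))
  (iso_cls : forall j l, rooted_iso (Vs j) (eH j) a (Vs l) (eH l) a -> cls j = cls l).

Definition block x := odflt (Ordinal m_gt0) [pick j | x \in Vs j].

Lemma mem_block x : x \in Vs (block x).
Proof.
rewrite /block; case: pickP => //= notin; have [j xj] := Vs_cover x.
by move: (notin j); rewrite xj.
Qed.

Lemma Vs_uniq x j l : x != a -> x \in Vs j -> x \in Vs l -> j = l.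
Proof.
move=> xa xj xl; apply/eqP; apply: contraNT xa => /Vs_meet meet_a.
have : x \in Vs j :&: Vs l by rewrite inE xj xl.
by rewrite meet_a inE.
Qed.

Lemma blockE x j : x != a -> x \in Vs j -> block x = j.
Proof. by move=> xa; apply: Vs_uniq xa (mem_block x). Qed.

Lemma edge_in_block j x y : x \in Vs j -> y \in Vs j -> e x y = eH j x y.
Proof.
move=> xj yj; apply/idP/idP => [exy | /eH_sub /and3P []//].
have [l [eHl _]] := edge_uniq exy; have /and3P [_ xl yl] := eH_sub eHl.
have [-> // | jl] := eqVneq j l.
have : x \in Vs j :&: Vs l by rewrite inE xj xl.
have : y \in Vs j :&: Vs l by rewrite inE yj yl.
by rewrite Vs_meet // !inE => /eqP ya /eqP xa; move: exy; rewrite xa ya e_irr.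
Qed.

Lemma edge_block x y : e x y -> y != a -> x \in Vs (block y).
Proof.
move=> exy ya; have [l [eHl _]] := edge_uniq exy; have /and3P [_ xl yl] := eH_sub eHl.
by rewrite (blockE ya yl).
Qed.

Lemma edge_same_block x y : e x y -> x != a -> y != a -> block x = block y.
Proof. by move=> exy xa ya; apply: blockE xa _; apply: edge_block. Qed.

(* [block_iso i j] is a pair (iso, inverse) between H_j and G_i, meaningful only when
   [cls j = i]; it is indexed by [i] rather than [cls j] so that blocks of the same class
   share the target type. *)
Definition is_block_iso i j (fg : {ffun T -> VG i} * {ffun VG i -> T}) :=
  [&& [forall x in Vs j, fg.2 (fg.1 x) == x], [forall v, fg.2 v \in Vs j],
      [forall v, fg.1 (fg.2 v) == v],
      [forall x in Vs j, forall y in Vs j, EG i (fg.1 x) (fg.1 y) == e x y]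
    & fg.1 a == aG i].
Arguments is_block_iso : clear implicits.

Lemma block_iso_exists i j : exists fg, (cls j == i) ==> is_block_iso i j fg.
Proof.
have [<- | _] := eqVneq (cls j) i; last by exists ([ffun=> aG i], [ffun=> a]).
have [f [f_inj f_im f_edge f_a]] := iso_G j.
pose h v := odflt a [pick x in Vs j | f x == v].
have hP v : h v \in Vs j /\ f (h v) = v.
  rewrite /h; case: pickP => [x /andP [xj /eqP fx] // | none].
  have : v \in f @: Vs j by rewrite f_im inE.
  by case/imsetP => x xj vx; move: (none x); rewrite xj vx eqxx.
exists ([ffun x => f x], [ffun v => h v]); apply/and5P; split.
- apply/forall_inP => x xj; rewrite !ffunE.
  by case: (hP (f x)) => hfx fhfx; apply/eqP/f_inj.
- by apply/forallP => v; rewrite ffunE; case: (hP v).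
- by apply/forallP => v; rewrite !ffunE; case: (hP v) => _ ->.
- apply/forall_inP => x xj; apply/forall_inP => y yj.
  by rewrite !ffunE f_edge // (edge_in_block xj yj).
- by rewrite ffunE f_a.
Qed.

Definition block_iso i j := xchoose (block_iso_exists i j).
Definition iso i j (x : T) : VG i := (block_iso i j).1 x.
Definition iso_inv i j (v : VG i) : T := (block_iso i j).2 v.
Arguments iso_inv : clear implicits.

Section BlockIso.
Variables (i : 'I_g) (j : 'I_m).
Hypothesis j_i : cls j = i.

Let isoP : is_block_iso i j (block_iso i j).
Proof. by move: (xchooseP (block_iso_exists i j)); rewrite {1}j_i eqxx. Qed.

Lemma isoK x : x \in Vs j -> iso_inv i j (iso i j x) = x.
Proof. by case/and5P: isoP => /forall_inP isoK _ _ _ _ /isoK/eqP. Qed.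

Lemma mem_iso_inv v : iso_inv i j v \in Vs j.
Proof. by case/and5P: isoP => _ /forallP /(_ v). Qed.

Lemma iso_invK v : iso i j (iso_inv i j v) = v.
Proof. by case/and5P: isoP => _ _ /forallP /(_ v) /eqP. Qed.

Lemma iso_edge x y : x \in Vs j -> y \in Vs j -> EG i (iso i j x) (iso i j y) = e x y.
Proof.
case/and5P: isoP => _ _ _ /forall_inP iso_e _ xj yj.
by move/forall_inP: (iso_e x xj) => /(_ y yj) /eqP.
Qed.

Lemma iso_root : iso i j a = aG i.
Proof. by case/and5P: isoP => _ _ _ _ /eqP. Qed.

Lemma iso_inv_root : iso_inv i j (aG i) = a.
Proof. by rewrite -iso_root isoK. Qed.

Lemma iso_inv_edge v w : e (iso_inv i j v) (iso_inv i j w) = EG i v w.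
Proof. by rewrite -iso_edge ?mem_iso_inv // !iso_invK. Qed.

Lemma iso_inv_inj : injective (iso_inv i j).
Proof. exact: can_inj iso_invK. Qed.

Lemma iso_inv_eq_root v : (iso_inv i j v == a) = (v == aG i).
Proof. by rewrite -iso_inv_root (inj_eq iso_inv_inj). Qed.

Lemma iso_eq_root x : x \in Vs j -> (iso i j x == aG i) = (x == a).
Proof. by move=> xj; rewrite -iso_inv_eq_root isoK. Qed.

End BlockIso.

Section Glue.
Variables (sg : 'I_m -> 'I_m) (q : forall i, 'I_m -> {perm VG i}).
Hypotheses (sg_inj : injective sg) (sg_cls : forall j, cls (sg j) = cls j)
  (q_aut : forall j, aut_fix (EG (cls j)) (aG (cls j)) (q (cls j) j)).

Let glue_block j x := iso_inv (cls j) (sg j) (q (cls j) j (iso (cls j) j x)).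
Let glue x := if x == a then a else glue_block (block x) x.

Let q_root j : q (cls j) j (aG (cls j)) = aG (cls j).
Proof. by case/aut_fixP: (q_aut j). Qed.

Let glue_block_root j : glue_block j a = a.
Proof. by rewrite /glue_block iso_root // q_root iso_inv_root. Qed.

Let glueE j x : x \in Vs j -> glue x = glue_block j x.
Proof.
rewrite /glue; have [-> _ | xa xj] := eqVneq x a; first by rewrite glue_block_root.
by rewrite (blockE xa xj).
Qed.

Let mem_glue_block j x : glue_block j x \in Vs (sg j).
Proof. exact: mem_iso_inv. Qed.

Let glue_block_eq_root j x : x \in Vs j -> (glue_block j x == a) = (x == a).
Proof.
move=> xj; rewrite /glue_block iso_inv_eq_root //.
by rewrite -[X in _ == X](q_root j) (inj_eq perm_inj) iso_eq_root.
Qed.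

Let glue_eq_root x : (glue x == a) = (x == a).
Proof. by rewrite (glueE (mem_block x)) glue_block_eq_root ?mem_block. Qed.

Let glue_inj : injective glue.
Proof.
move=> x y; have [-> | xa] := eqVneq x a; have [-> | ya] := eqVneq y a => //.
- by move/(congr1 (eq_op^~ a)); rewrite !glue_eq_root eqxx (negPf ya).
- by move/(congr1 (eq_op^~ a)); rewrite !glue_eq_root eqxx (negPf xa).
rewrite (glueE (mem_block x)) (glueE (mem_block y)) => E.
have gxa : glue_block (block x) x != a by rewrite glue_block_eq_root ?mem_block.
have /sg_inj bxy : sg (block x) = sg (block y).
  by apply: Vs_uniq gxa (mem_glue_block _ _) _; rewrite E mem_glue_block.
move: E; rewrite /glue_block -bxy => /(iso_inv_inj (sg_cls _)) /perm_inj.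
move/(congr1 (iso_inv (cls (block x)) (block x))).
by rewrite !isoK ?mem_block // bxy mem_block.
Qed.

Let glue_mem_block x y : y != a -> (glue x \in Vs (sg (block y))) = (x \in Vs (block y)).
Proof.
move=> ya; apply/idP/idP => [gx | xy]; last by rewrite (glueE xy).
have [-> | xa] := eqVneq x a; first exact: a_in_Vs.
move: gx; rewrite (glueE (mem_block x)) => gx.
have gxa : glue_block (block x) x != a by rewrite glue_block_eq_root ?mem_block.
by rewrite -(sg_inj (Vs_uniq gxa (mem_glue_block _ _) gx)) mem_block.
Qed.

Let glue_edge x y : y != a -> e (glue x) (glue y) = e x y.
Proof.
move=> ya; have gya : glue y != a by rewrite glue_eq_root.
have block_gy : block (glue y) = sg (block y).
  by apply: blockE gya _; rewrite (glueE (mem_block y)).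
have [xy | xny] := boolP (x \in Vs (block y)); last first.
  apply/idP/idP => [exy | exy]; last by move: (edge_block exy ya); rewrite (negPf xny).
  by move: (edge_block exy gya); rewrite block_gy glue_mem_block // (negPf xny).
rewrite (glueE xy) (glueE (mem_block y)) /glue_block iso_inv_edge ?sg_cls //.
by case/aut_fixP: (q_aut (block y)) => ->; rewrite iso_edge ?mem_block.
Qed.

Lemma glue_aut : exists P : {perm T}, aut_fix e a P /\
  forall j x, x \in Vs j -> P x = iso_inv (cls j) (sg j) (q (cls j) j (iso (cls j) j x)).
Proof.
exists (perm glue_inj); split; last by move=> j x xj; rewrite permE (glueE xj).
apply/aut_fixP; split; last by rewrite permE /glue eqxx.
move=> x y; rewrite !permE; have [-> | ya] := eqVneq y a; last exact: glue_edge.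
have [-> | xa] := eqVneq x a; first by rewrite /glue eqxx.
by rewrite e_sym [RHS]e_sym glue_edge.
Qed.

End Glue.

Definition witness j := odflt a [pick x in Vs j :\ a].

Lemma witnessP j : witness j \in Vs j :\ a.
Proof.
rewrite /witness; case: pickP => //= none.
by have /set0Pn [x] := Vs_a_neq0 j; rewrite none.
Qed.

Lemma aut_block_map p : aut_fix e a p ->
  exists sg : 'I_m -> 'I_m, forall j x, x \in Vs j -> p x \in Vs (sg j).
Proof.
case/aut_fixP => pe pa; exists (fun j => block (p (witness j))) => j x xj.
have [-> | xa] := eqVneq x a; first by rewrite pa a_in_Vs.
have p_neq_a z : z != a -> p z != a by rewrite -[in p z != _]pa (inj_eq perm_inj).
pose same_block := [pred z | block (p z) == block (p (witness j))].
have closed_same_block :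
    closed [rel u v | [&& eH j u v, u \in Vs j :\ a & v \in Vs j :\ a]] same_block.
  move=> u v /and3P [eHuv]; rewrite !inE => /andP [ua _] /andP [va _] /=.
  have /and3P [euv _ _] := eH_sub eHuv.
  by rewrite (@edge_same_block (p u) (p v)) ?pe ?p_neq_a.
have xj' : x \in Vs j :\ a by rewrite !inE xa xj.
have := closed_connect closed_same_block (Vs_a_connected (witnessP j) xj').
by rewrite !inE eqxx => /esym /eqP <-; apply: mem_block.
Qed.

Lemma aut_block_perm p : aut_fix e a p ->
  exists sg : 'I_m -> 'I_m, [/\ injective sg, forall j, cls (sg j) = cls j &
     forall j x, x \in Vs j -> p x \in Vs (sg j)].
Proof.
move=> Ap; have [sg p_sg] := aut_block_map Ap; have [tg pV_tg] := aut_block_map (aut_fixV Ap).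
have /aut_fixP [pe pa] := Ap.
have sgK : cancel sg tg.
  move=> j; have := witnessP j; rewrite !inE => /andP [wa wj].
  have := pV_tg _ _ (p_sg _ _ wj); rewrite permK => wtg.
  exact: Vs_uniq wa wtg wj.
exists sg; split=> [|j|//]; first exact: can_inj sgK.
apply/esym/iso_cls; exists p; split=> // [x y _ _ | | x y xj yj].
- exact: perm_inj.
- apply/setP => y; apply/imsetP/idP => [[x xj ->] | ysg]; first exact: p_sg.
  by exists (p^-1%g y); rewrite ?permKV // -(sgK j) pV_tg.
- by rewrite -!edge_in_block ?pe ?p_sg.
Qed.

Lemma aut_transport p i j l : aut_fix e a p -> cls j = i -> cls l = i ->
  (forall x, x \in Vs j -> p x \in Vs l) ->
  exists q : {perm VG i}, aut_fix (EG i) (aG i) q /\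
    forall v, q v = iso i l (p (iso_inv i j v)).
Proof.
move=> /aut_fixP [pe pa] j_i l_i p_jl.
have q_inj : injective (fun v => iso i l (p (iso_inv i j v))).
  move=> v w /(congr1 (iso_inv i l)); rewrite !isoK ?p_jl ?mem_iso_inv //.
  by move/perm_inj/(iso_inv_inj j_i).
exists (perm q_inj); split; last by move=> v; rewrite permE.
apply/aut_fixP; split=> [v w|]; rewrite !permE.
  by rewrite -(iso_inv_edge l_i) !isoK ?p_jl ?mem_iso_inv // pe iso_inv_edge.
by rewrite iso_inv_root // pa iso_root.
Qed.

Section Labelings.
Variable k : nat.

Definition restr i j (phi : labeling T k) : labeling (VG i) k :=
  [ffun v => phi (iso_inv i j v)].

Definition equiv_aut i (psi psi' : labeling (VG i) k) : {perm VG i} :=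
  odflt 1%g [pick q | aut_fix (EG i) (aG i) q && [forall v, psi' (q v) == psi v]].

Lemma equiv_autP i (psi psi' : labeling (VG i) k) :
  lab_equiv (EG i) (aG i) psi psi' ->
  aut_fix (EG i) (aG i) (equiv_aut psi psi') /\
  forall v, psi' (equiv_aut psi psi' v) = psi v.
Proof.
rewrite /equiv_aut => /existsP [q0 q0P].
case: pickP => [q /andP [Aq /forallP qP] | /(_ q0)]; last by rewrite q0P.
by split=> // v; apply/eqP.
Qed.

Lemma glue_equiv (sg : 'I_m -> 'I_m) (phi phi' : labeling T k) :
  injective sg -> (forall j, cls (sg j) = cls j) ->
  (forall j, lab_equiv (EG (cls j)) (aG (cls j))
               (restr (cls j) j phi) (restr (cls j) (sg j) phi')) ->
  exists P : {perm T}, [/\ aut_fix e a P, forall x, phi' (P x) = phi x &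
    forall j x, x \in Vs j -> P x \in Vs (sg j)].
Proof.
move=> sg_inj sg_cls restr_equiv.
pose q i j := equiv_aut (restr i j phi) (restr i (sg j) phi').
have [P [AP PE]] := @glue_aut sg q sg_inj sg_cls (fun j => (equiv_autP (restr_equiv j)).1).
exists P; split=> // [x | j x xj]; last by rewrite (PE _ _ xj) mem_iso_inv ?sg_cls.
rewrite (PE _ _ (mem_block x)).
have := (equiv_autP (restr_equiv (block x))).2 (iso (cls (block x)) (block x) x).
by rewrite !ffunE isoK ?mem_block.
Qed.

Lemma lab_equiv_glue (sg : 'I_m -> 'I_m) (phi phi' : labeling T k) :
  injective sg -> (forall j, cls (sg j) = cls j) ->
  (forall j, lab_equiv (EG (cls j)) (aG (cls j))
               (restr (cls j) j phi) (restr (cls j) (sg j) phi')) ->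
  lab_equiv e a phi phi'.
Proof.
move=> sg_inj sg_cls restr_equiv; have [P [AP PE _]] := glue_equiv sg_inj sg_cls restr_equiv.
by apply/existsP; exists P; rewrite AP; apply/forallP => x; rewrite PE.
Qed.

Lemma aut_transport_restr p sg j (phi phi' : labeling T k) :
  aut_fix e a p -> (forall x, phi' (p x) == phi x) -> cls (sg j) = cls j ->
  (forall x, x \in Vs j -> p x \in Vs (sg j)) ->
  exists q : {perm VG (cls j)}, [/\ aut_fix (EG (cls j)) (aG (cls j)) q,
    forall v, q v = iso (cls j) (sg j) (p (iso_inv (cls j) j v)) &
    forall v, restr (cls j) (sg j) phi' (q v) = restr (cls j) j phi v].
Proof.
move=> Ap pE sg_cls p_sg; have [q [Aq qE]] := aut_transport Ap (erefl (cls j)) sg_cls p_sg.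
exists q; split=> // v.
by rewrite !ffunE qE isoK ?sg_cls ?p_sg ?mem_iso_inv // (eqP (pE _)).
Qed.

Lemma lab_equiv_blocks (phi phi' : labeling T k) : lab_equiv e a phi phi' ->
  exists sg : 'I_m -> 'I_m, [/\ injective sg, forall j, cls (sg j) = cls j &
    forall j, lab_equiv (EG (cls j)) (aG (cls j))
                (restr (cls j) j phi) (restr (cls j) (sg j) phi')].
Proof.
case/existsP => p /andP [Ap /forallP pE].
have [sg [sg_inj sg_cls p_sg]] := aut_block_perm Ap.
exists sg; split=> // j.
have [q [Aq _ qE]] := aut_transport_restr Ap pE (sg_cls j) (p_sg j).
by apply/existsP; exists q; rewrite Aq; apply/forallP => v; rewrite qE.
Qed.

Lemma distinguishing_restr (phi : labeling T k) i j :
  distinguishing e a phi -> cls j = i -> distinguishing (EG i) (aG i) (restr i j phi).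
Proof.
move=> dphi <-; apply/forallP => q; apply/implyP => /andP [Aq qphi].
apply/negPn/negP => q_neq1.
(* [q] on block [j], glued with the identity elsewhere, would be a nontrivial
   automorphism preserving [phi]. *)
pose twist i' j' := odflt 1%g [pick q0 : {perm VG i'} | (j' == j) &&
  [&& aut_fix (EG i') (aG i') q0, preserves q0 (restr i' j' phi) & q0 != 1%g]].
have twistP j' : aut_fix (EG (cls j')) (aG (cls j')) (twist (cls j') j') &&
                 preserves (twist (cls j') j') (restr (cls j') j' phi).
  rewrite /twist; case: pickP => [q0 /andP [_ /and3P [-> -> _]] // | _].
  by rewrite aut_fix1 preserves1.
have twist_neq1 : twist (cls j) j != 1%g.
  by rewrite /twist; case: pickP => [q0 /and4P [] // | /(_ q)]; rewrite eqxx Aq qphi q_neq1.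
have [P [AP PE]] := @glue_aut id twist (@inj_id _) (fun _ => erefl)
   (fun j' => proj1 (andP (twistP j'))).
have P1 : P = 1%g.
  apply: distinguishing_perm1 dphi AP _; apply/forallP => x; rewrite (PE _ _ (mem_block x)).
  case/andP: (twistP (block x)) => _ /forallP /(_ (iso (cls (block x)) (block x) x)).
  by rewrite !ffunE isoK ?mem_block.
move/negP: twist_neq1; apply; apply/eqP/permP => v; rewrite perm1.
apply: (iso_inv_inj (erefl (cls j))).
by have := PE j _ (mem_iso_inv (erefl (cls j)) v); rewrite P1 perm1 iso_invK.
Qed.

Lemma restr_not_equiv (phi : labeling T k) i j l : distinguishing e a phi ->
  cls j = i -> cls l = i -> j != l -> ~~ lab_equiv (EG i) (aG i) (restr i j phi) (restr i l phi).
Proof.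
move=> dphi j_i l_i jl; apply/negP => restr_jl.
pose sg : 'I_m -> 'I_m := tperm j l.
have sg_cls j' : cls (sg j') = cls j'.
  by rewrite /sg; case: tpermP => [-> | -> |]; rewrite ?j_i ?l_i.
have restr_equiv j' : lab_equiv (EG (cls j')) (aG (cls j'))
    (restr (cls j') j' phi) (restr (cls j') (sg j') phi).
  rewrite /sg; case: tpermP => [-> | -> | _ _]; last exact: lab_equiv_refl.
    by rewrite j_i.
  by rewrite l_i; apply: lab_equiv_sym.
have [P [AP PE P_sg]] := glue_equiv (@perm_inj _ _) sg_cls restr_equiv.
have P1 : P = 1%g.
  by apply: distinguishing_perm1 dphi AP _; apply/forallP => x; rewrite PE.
have := witnessP j; rewrite !inE => /andP [wa wj].
have := P_sg _ _ wj; rewrite P1 perm1 /sg tpermL => wl.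
by move: jl; rewrite (Vs_uniq wa wj wl) eqxx.
Qed.

Lemma distinguishing_glue (phi : labeling T k) :
  (forall j, distinguishing (EG (cls j)) (aG (cls j)) (restr (cls j) j phi)) ->
  (forall i j l, cls j = i -> cls l = i -> j != l ->
     ~~ lab_equiv (EG i) (aG i) (restr i j phi) (restr i l phi)) ->
  distinguishing e a phi.
Proof.
move=> restr_dist restr_neq; apply/forallP => p; apply/implyP => /andP [Ap /forallP pE].
have [sg [sg_inj sg_cls p_sg]] := aut_block_perm Ap.
have transport j := aut_transport_restr Ap pE (sg_cls j) (p_sg j).
have sg_id j : sg j = j.
  apply/eqP/negPn/negP => sgj_neq; have [q [Aq _ qphi]] := transport j.
  move: (restr_neq (cls j) j (sg j) erefl (sg_cls j)); rewrite eq_sym sgj_neq.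
  move=> /(_ isT) /negP; apply; apply/existsP; exists q; rewrite Aq.
  by apply/forallP => v; rewrite qphi.
apply/eqP/permP => x; rewrite perm1; set j := block x; have xj : x \in Vs j := mem_block x.
have [q [Aq qE qphi]] := transport j.
have q1 : q = 1%g.
  apply: distinguishing_perm1 (restr_dist j) Aq _.
  by apply/forallP => v; move: (qphi v); rewrite sg_id => ->.
have := qE (iso (cls j) j x); rewrite q1 perm1 isoK // => /(congr1 (iso_inv (cls j) (sg j))).
by rewrite isoK ?sg_cls ?p_sg // sg_id isoK.
Qed.

Definition restr_classes i (phi : labeling T k) : {set {set labeling (VG i) k}} :=
  [set lab_class (EG i) (aG i) (restr i j phi) | j in [set j | cls j == i]].

Definition code_type := {dffun forall i : 'I_g, {set {set labeling (VG i) k}}}.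

Definition class_code (phi : labeling T k) : 'I_k * code_type :=
  (phi a, [ffun i => restr_classes i phi]).

Lemma restr_classes_sub i (phi phi' : labeling T k) :
  distinguishing e a phi -> distinguishing e a phi' -> lab_equiv e a phi phi' ->
  restr_classes i phi \subset restr_classes i phi'.
Proof.
move=> dphi dphi' /lab_equiv_blocks [sg [_ sg_cls restr_equiv]].
apply/subsetP => C /imsetP [j]; rewrite inE => /eqP j_i ->.
apply/imsetP; exists (sg j); first by rewrite inE sg_cls j_i.
by apply/eqP; rewrite eq_lab_class -?j_i ?restr_equiv // distinguishing_restr ?sg_cls.
Qed.

Lemma restr_classes_block_perm (phi phi' : labeling T k) :
  distinguishing e a phi -> distinguishing e a phi' ->
  (forall i, restr_classes i phi = restr_classes i phi') ->
  exists sg : 'I_m -> 'I_m, [/\ injective sg, forall j, cls (sg j) = cls j &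
    forall j, lab_equiv (EG (cls j)) (aG (cls j))
                (restr (cls j) j phi) (restr (cls j) (sg j) phi')].
Proof.
move=> dphi dphi' same_classes.
have match_block j : exists l, (cls l == cls j) &&
    (lab_class (EG (cls j)) (aG (cls j)) (restr (cls j) j phi) ==
     lab_class (EG (cls j)) (aG (cls j)) (restr (cls j) l phi')).
  have : lab_class (EG (cls j)) (aG (cls j)) (restr (cls j) j phi) \in
         restr_classes (cls j) phi' by rewrite -same_classes; apply: imset_f; rewrite inE.
  by case/imsetP => l; rewrite inE => l_j E; exists l; rewrite l_j E eqxx.
pose sg j := xchoose (match_block j).
have /all_and2 [sg_cls sg_class] j : cls (sg j) = cls j /\
    lab_class (EG (cls j)) (aG (cls j)) (restr (cls j) j phi) =
    lab_class (EG (cls j)) (aG (cls j)) (restr (cls j) (sg j) phi').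
  by case/andP: (xchooseP (match_block j)) => /eqP -> /eqP.
have restr_equiv j : lab_equiv (EG (cls j)) (aG (cls j))
    (restr (cls j) j phi) (restr (cls j) (sg j) phi').
  by rewrite -eq_lab_class ?sg_class // distinguishing_restr.
exists sg; split=> // j1 j2 sg12; apply/eqP/negPn/negP => j12.
have j2_j1 : cls j2 = cls j1 by rewrite -sg_cls -sg12 sg_cls.
have := sg_class j2; rewrite j2_j1 -sg12 -sg_class => /eqP.
rewrite eq_lab_class ?distinguishing_restr //.
by rewrite (negPf (restr_not_equiv dphi j2_j1 erefl _)) // eq_sym.
Qed.

Lemma eq_class_code (phi phi' : labeling T k) :
  distinguishing e a phi -> distinguishing e a phi' ->
  (lab_class e a phi == lab_class e a phi') = (class_code phi == class_code phi').
Proof.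
move=> dphi dphi'; rewrite eq_lab_class //; apply/idP/eqP => [phi_phi' | [phia same_classes]].
  rewrite /class_code (lab_equiv_root phi_phi'); congr (_, _); apply/ffunP => i.
  rewrite !ffunE; apply/eqP; rewrite eqEsubset !restr_classes_sub //.
  exact: lab_equiv_sym.
have [|sg [sg_inj sg_cls restr_equiv]] := restr_classes_block_perm dphi dphi'.
  by move=> i; move/ffunP: same_classes => /(_ i); rewrite !ffunE.
exact: lab_equiv_glue sg_inj sg_cls restr_equiv.
Qed.

Definition code_choices (c : 'I_k) i : {set {set {set labeling (VG i) k}}} :=
  [set B : {set {set labeling (VG i) k}} |
     B \subset lab_class (EG i) (aG i) @: dist_root (EG i) (aG i) c &
     #|B| == #|[set j | cls j == i]|].

Lemma class_code_choices (c : 'I_k) (S : code_type) :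
  (c, S) \in class_code @: [set phi | distinguishing e a phi] -> S \in setXn (code_choices c).
Proof.
case/imsetP => phi; rewrite inE => dphi [-> ->].
apply/setXnP => i; rewrite ffunE inE; apply/andP; split.
  apply/subsetP => C /imsetP [j]; rewrite inE => /eqP j_i ->.
  apply: imset_f; rewrite inE distinguishing_restr //= ffunE iso_inv_root //.
rewrite card_in_imset // => j l; rewrite !inE => /eqP j_i /eqP l_i /eqP.
rewrite eq_lab_class ?distinguishing_restr //.
by apply: contraTeq => jl; apply: restr_not_equiv.
Qed.

Section Realization.
Variables (c : 'I_k) (S : code_type).
Hypothesis S_choice : S \in setXn (code_choices c).

(* Number the blocks of class [i] and the classes in [S i] consistently through [enum]. *)
Let blocks i := enum [set j | cls j == i].
Let classes i := enum (S i).
Let class_of i j := nth set0 (classes i) (index j (blocks i)).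
Let rep i j := odflt [ffun=> c] [pick psi : labeling (VG i) k |
   (psi \in dist_root (EG i) (aG i) c) && (lab_class (EG i) (aG i) psi == class_of i j)].
Let realized : labeling T k := [ffun x => if x == a then c else
   rep (cls (block x)) (block x) (iso (cls (block x)) (block x) x)].

Let S_sub i : S i \subset lab_class (EG i) (aG i) @: dist_root (EG i) (aG i) c.
Proof. by move/setXnP: S_choice => /(_ i); rewrite inE => /andP []. Qed.

Let size_classes i : size (classes i) = size (blocks i).
Proof.
by move/setXnP: S_choice => /(_ i); rewrite inE -!cardE => /andP [_ /eqP].
Qed.

Let class_of_in i j : cls j = i -> class_of i j \in S i.
Proof.
move=> j_i; rewrite -mem_enum; apply: mem_nth.
by rewrite size_classes index_mem mem_enum inE j_i.
Qed.

Let repP i j : cls j = i ->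
  rep i j \in dist_root (EG i) (aG i) c /\ lab_class (EG i) (aG i) (rep i j) = class_of i j.
Proof.
move=> j_i; have /imsetP [psi0 psi0_in psi0_class] := subsetP (S_sub i) _ (class_of_in j_i).
rewrite /rep; case: pickP => [psi /andP [-> /eqP ->] // | /(_ psi0)].
by rewrite psi0_in psi0_class eqxx.
Qed.

Let restr_realized i j : cls j = i -> restr i j realized = rep i j.
Proof.
move=> j_i; have [rep_root _] := repP j_i; subst i.
apply/ffunP => v; rewrite !ffunE; have [va | vna] := eqVneq (iso_inv (cls j) j v) a.
  move/eqP: va; rewrite iso_inv_eq_root // => /eqP ->.
  by move: rep_root; rewrite inE => /andP [_ /eqP].
by rewrite (blockE vna (mem_iso_inv _ _)) // iso_invK.
Qed.

Let distinguishing_realized : distinguishing e a realized.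
Proof.
apply: distinguishing_glue => [j | i j l j_i l_i jl].
  by rewrite restr_realized //; case: (repP (erefl (cls j))); rewrite inE => /andP [].
rewrite (restr_realized j_i) (restr_realized l_i); apply/negP => rep_jl.
have [+ class_j] := repP j_i; have [+ class_l] := repP l_i.
rewrite !inE => /andP [dl _] /andP [dj _].
move: rep_jl; rewrite -eq_lab_class // class_j class_l /class_of.
have jJ : j \in blocks i by rewrite mem_enum inE j_i.
have lJ : l \in blocks i by rewrite mem_enum inE l_i.
rewrite nth_uniq ?size_classes ?index_mem ?enum_uniq // => /eqP idx_jl.
by move: jl; rewrite -(nth_index j jJ) -(nth_index j lJ) idx_jl eqxx.
Qed.

Let class_code_realized : class_code realized = (c, S).
Proof.
rewrite /class_code ffunE eqxx; congr (_, _); apply/ffunP => i; rewrite ffunE.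
have -> : restr_classes i realized = [set class_of i j | j in [set j | cls j == i]].
  apply: eq_in_imset => j; rewrite inE => /eqP j_i.
  by rewrite (restr_realized j_i) (repP j_i).2.
apply/setP => B; apply/imsetP/idP => [[j] | BS].
  by rewrite inE => /eqP j_i ->; apply: class_of_in.
have BL : B \in classes i by rewrite mem_enum.
have idxB : index B (classes i) < size (blocks i) by rewrite -size_classes index_mem.
exists (nth (Ordinal m_gt0) (blocks i) (index B (classes i))).
  by rewrite -mem_enum; apply: mem_nth.
by rewrite /class_of index_uniq ?enum_uniq // nth_index.
Qed.

Lemma class_code_realize : (c, S) \in class_code @: [set phi | distinguishing e a phi].
Proof. by rewrite -class_code_realized imset_f // inE distinguishing_realized. Qed.

End Realization.

Lemma Dnum_blocks : 0 < k ->
  Dnum e a k = k * \prod_(i < g) 'C(Dnum (EG i) (aG i) k %/ k, #|[set j | cls j == i]|).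
Proof.
move=> k_gt0; rewrite DnumE (@card_imset_kernel _ _ _ _ _ class_code); last first.
  by move=> phi psi; rewrite !inE; apply: eq_class_code.
rewrite card_by_fst -[k in k * _]card_ord -sum_nat_const; apply: eq_bigr => c _.
have -> : #|[set S | (c, S) \in class_code @: [set phi | distinguishing e a phi]]| =
          #|setXn (code_choices c)|.
  apply: eq_card => S; rewrite inE; apply/idP/idP; first exact: class_code_choices.
  exact: class_code_realize.
rewrite cardsXn; apply: eq_bigr => i _.
by rewrite cards_draws (Dnum_root _ _ c) mulKn.
Qed.

End Labelings.
End BlockDecomposition.

Theorem theorem6
  (T : finType) (e : rel T) (a : T)
  (m : nat) (Vs : 'I_m -> {set T}) (eH : 'I_m -> rel T)
  (g : nat) (VG : 'I_g -> finType) (EG : forall i, rel (VG i))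
  (aG : forall i, VG i) (cls : 'I_m -> 'I_g) :
  symmetric e -> irreflexive e ->
  0 < m ->
  (forall j, a \in Vs j) ->
  (forall j, symmetric (eH j)) ->
  (forall j x y, eH j x y -> [&& e x y, x \in Vs j & y \in Vs j]) ->
  (forall j, connected_on (Vs j) (eH j)) ->
  (forall j, Vs j :\ a != set0) ->
  (forall j, connected_on (Vs j :\ a) (eH j)) ->
  (forall j l, j != l -> Vs j :&: Vs l = [set a]) ->
  (forall x, exists j, x \in Vs j) ->
  (forall x y, e x y -> exists! j, eH j x y) ->
  (forall i, symmetric (EG i) /\ irreflexive (EG i)) ->
  (forall i, exists j, cls j = i) ->
  (forall j, rooted_iso (Vs j) (eH j) a [set: VG (cls j)] (EG (cls j)) (aG (cls j))) ->
  (forall j l, rooted_iso (Vs j) (eH j) a (Vs l) (eH l) a <-> cls j = cls l) ->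
  forall k, 0 < k ->
    Dnum e a k =
    k * \prod_(i < g) 'C(Dnum (EG i) (aG i) k %/ k, #|[set j | cls j == i]|).
Proof.
move=> e_sym e_irr m_gt0 a_in_Vs _ eH_sub _ Vs_a_neq0 Vs_a_connected Vs_meet Vs_cover
  edge_uniq _ _ iso_G iso_cls k k_gt0.
exact: (@Dnum_blocks T e a m Vs eH g VG EG aG cls e_sym e_irr m_gt0 a_in_Vs eH_sub
  Vs_a_neq0 Vs_a_connected Vs_meet Vs_cover edge_uniq iso_G (fun j l => proj1 (iso_cls j l))
  k k_gt0).
Qed.
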